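(* For any choice function $\tau$ and any minimal choice of horizontal edges $\mathcal H=\mathcal H^{\min}$, the homomorphism $\varphi_{\tau,\mathcal H}: C(X,\mathbb{Z})\cong K_0(C(X))\to\mathbb{Z}$ is non-trivial. In particular, the $K$-homology class of a Pearson–Bellissard spectral triple is never trivial.
   Context: Let $(X,d)$ be an infinite compact ultrametric space, identified with the boundary $\partial\mathcal{T}$ (infinite paths from the root) of its Michon tree $\mathcal{T}=(\mathcal{T}^{(0)},\mathcal{T}^{(1)})$, whose level-$n$ vertices are the balls of the $n$-th radius in the image of $d$. For a vertex $v$ let $\mathcal{T}^{(0)}(v)$ be its set of immediate successors and $\chi_v$ the indicator function of the set of infinite paths through $v$. A minimal choice of horizontal edges $\mathcal H^{\min}$ consists, for each branching vertex $v$, of two distinct vertices of $\mathcal{T}^{(0)}(v)$ linked by two edges (one in each direction). A choice function $\tau:\mathcal{T}^{(0)}\to\partial\mathcal{T}$ satisfies: $\tau(v)$ passes through $v$, and if $w\prec v$ then $\tau(w)=\tau(v)$ iff $\tau(w)$ passes through $v$. Fix an orientation $\mathcal H=\mathcal H^+\cup\mathcal H^-$. The spectral triple on $\ell^2(\mathcal H)=\ell^2(\mathcal H^+)\oplus\ell^2(\mathcal H^-)$ with representation $\pi_\tau(f)\psi(h)=f(\tau(s(h)))\psi(h)$ and Dirac operator $D\psi(h)=\delta(h)^{-1}\psi(h^{\mathrm{op}})$ (this is the Pearson–Bellissard triple when $\mathcal H=\mathcal H^{\min}$) gives the even Fredholm module with $F=\mathrm{sign}(D)$, whose off-diagonal part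 $T:\ell^2(\mathcal H^+)\to\ell^2(\mathcal H^-)$ is $T1_h=1_{h^{\mathrm{op}}}$. Its Connes pairing with $K_0$ is $\varphi_{\tau,\mathcal H}(p)=\mathrm{Ind}(\pi_-(p)T\pi_+(p))$, explicitly $\varphi_{\tau,\mathcal H}(\chi_v)=\sum_{h\in\mathcal H^+}\big(\chi_v(\tau(s(h)))-\chi_v(\tau(r(h)))\big)$. *)

From Stdlib Require Import Reals ZArith List ClassicalEpsilon.
Set Implicit Arguments.
Open Scope R_scope.

Record ultrametric (X : Type) (d : X -> X -> R) : Prop := {
  um_nonneg : forall x y, 0 <= d x y;
  um_sep : forall x y, d x y = 0 <-> x = y;
  um_sym : forall x y, d x y = d y x;
  um_ineq : forall x y z, d x z <= Rmax (d x y) (d y z) }.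

Definition seq_compact (X : Type) (d : X -> X -> R) : Prop :=
  forall u : nat -> X, exists (x : X) (phi : nat -> nat),
    (forall n, (phi n < phi (S n))%nat) /\
    (forall eps, 0 < eps -> exists N, forall n, (N <= n)%nat -> d (u (phi n)) x < eps).

Definition infinite_type (X : Type) : Prop := ~ exists l : list X, forall x, In x l.

Definition radii_of (X : Type) (d : X -> X -> R) (r : nat -> R) : Prop :=
  (forall n, r (S n) < r n) /\
  (forall t, (exists x y, x <> y /\ d x y = t) <-> exists n, r n = t).

Definition cball (X : Type) (d : X -> X -> R) (x : X) (t : R) : X -> Prop :=
  fun y => d x y <= t.

(** Vertices of the Michon tree: (level n, closed ball of radius r n). *)
Definition vtx (X : Type) : Type := (nat * (X -> Prop))%type.

Definition is_vertex (X : Type) (d : X -> X -> R) (r : nat -> R) (v : vtx X) : Prop :=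
  exists x, snd v = cball d x (r (fst v)).

Definition is_child (X : Type) (d : X -> X -> R) (r : nat -> R) (v w : vtx X) : Prop :=
  is_vertex d r v /\ is_vertex d r w /\ fst w = S (fst v) /\
  (forall y, snd w y -> snd v y).

Definition branching (X : Type) (d : X -> X -> R) (r : nat -> R) (v : vtx X) : Prop :=
  is_vertex d r v /\ exists w1 w2, is_child d r v w1 /\ is_child d r v w2 /\ w1 <> w2.

Definition precedes (X : Type) (d : X -> X -> R) (r : nat -> R) (w v : vtx X) : Prop :=
  is_vertex d r w /\ is_vertex d r v /\ (fst w < fst v)%nat /\
  (forall y, snd v y -> snd w y).

(** The infinite path through the point x passes through v iff x lies in the ball v. *)
Definition passes (X : Type) (x : X) (v : vtx X) : Prop := snd v x.

Definition choice_function (X : Type) (d : X -> X -> R) (r : nat -> R)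
    (tau : vtx X -> X) : Prop :=
  (forall v, is_vertex d r v -> passes (tau v) v) /\
  (forall w v, precedes d r w v -> (tau w = tau v <-> passes (tau w) v)).

(** An oriented minimal choice of horizontal edges: for each branching v,
    hp v = (s(h), r(h)) for the edge h in H^+ between the two chosen
    distinct successors of v (its opposite edge lies in H^-). *)
Definition oriented_min_edges (X : Type) (d : X -> X -> R) (r : nat -> R)
    (hp : vtx X -> vtx X * vtx X) : Prop :=
  forall v, branching d r v ->
    is_child d r v (fst (hp v)) /\ is_child d r v (snd (hp v)) /\
    fst (hp v) <> snd (hp v).

Definition chi (X : Type) (v : vtx X) (x : X) : Z :=
  if excluded_middle_informative (snd v x) then 1%Z else 0%Z.

Definition fin_sum_eq (V : Type) (A : V -> Prop) (f : V -> Z) (s : Z) : Prop :=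
  exists l : list V, NoDup l /\ (forall v, In v l -> A v) /\
    (forall v, A v -> f v <> 0%Z -> In v l) /\
    fold_right (fun v acc => (f v + acc)%Z) 0%Z l = s.

(** phi_{tau,H}(chi_w) = sum_{h in H^+} (chi_w(tau(s h)) - chi_w(tau(r h))) = k *)
Definition phi_chi_eq (X : Type) (d : X -> X -> R) (r : nat -> R)
    (tau : vtx X -> X) (hp : vtx X -> vtx X * vtx X) (w : vtx X) (k : Z) : Prop :=
  fin_sum_eq (branching d r)
    (fun v => (chi w (tau (fst (hp v))) - chi w (tau (snd (hp v))))%Z) k.

(** The pairing against the indicator of a child [w1] of the root, where
    [(w1, w2)] is the horizontal edge chosen at the root, equals 1.  At the
    root, [tau w1] lies in [w1] while [tau w2] does not, since distinct balls
    of the same radius of an ultrametric are disjoint.  Every other branching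
    vertex [v] sits at level at least 1, so both choices [tau] made below [v]
    lie in the ball [v], whose radius is at most that of [w1]; the
    ultrametric inequality then puts them both inside [w1] or both outside,
    and the edge at [v] contributes nothing. *)
From Stdlib Require Import Reals ZArith List Lra Lia.
From Stdlib Require Import Classical ClassicalEpsilon FunctionalExtensionality PropExtensionality.
Set Implicit Arguments.
Open Scope R_scope.

Lemma fin_sum_eq_single (V : Type) (A : V -> Prop) (f : V -> Z) (v0 : V) :
  A v0 -> (forall v, A v -> f v <> 0%Z -> v = v0) -> fin_sum_eq A f (f v0).
Proof.
  intros Av0 Hsupp. exists (v0 :: nil). repeat split.
  - constructor; [intros []|constructor].
  - intros v [<-|[]]; exact Av0.
  - intros v Av Hfv. left. symmetry. exact (Hsupp v Av Hfv).
  - simpl. lia.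
Qed.

Section Ultrametric.

Variables (X : Type) (d : X -> X -> R).
Hypothesis U : ultrametric d.

Lemma um_le_trans (x y z : X) (t : R) : d x y <= t -> d y z <= t -> d x z <= t.
Proof. intros Hxy Hyz. eapply Rle_trans; [apply (um_ineq U x y z)|]. now apply Rmax_lub. Qed.

Lemma cball_dist_le (x p q : X) (t : R) :
  cball d x t p -> cball d x t q -> d p q <= t.
Proof. unfold cball. intros Hp Hq. rewrite (um_sym U) in Hp. exact (um_le_trans Hp Hq). Qed.

Lemma cball_mem_move (x y z : X) (t : R) :
  d y z <= t -> cball d x t y -> cball d x t z.
Proof. unfold cball. intros Hyz Hy. exact (um_le_trans Hy Hyz). Qed.

Lemma cball_eq_of_mem (x y p : X) (t : R) :
  cball d x t p -> cball d y t p -> cball d x t = cball d y t.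
Proof.
  unfold cball. intros Hx Hy. rewrite (um_sym U) in Hx.
  assert (Hxy : d y x <= t) by exact (um_le_trans Hy Hx).
  apply functional_extensionality; intro z. apply propositional_extensionality.
  split; intro Hz.
  - exact (um_le_trans Hxy Hz).
  - rewrite (um_sym U) in Hxy. exact (um_le_trans Hxy Hz).
Qed.

Variable r : nat -> R.
Hypothesis Hr : radii_of d r.

Lemma radii_antitone (m n : nat) : (m <= n)%nat -> r n <= r m.
Proof. induction 1 as [|n _ IH]; [lra|]. pose proof (proj1 Hr n). lra. Qed.

Lemma radii_nonneg (n : nat) : 0 <= r n.
Proof.
  destruct (proj2 (proj2 Hr (r n)) (ex_intro _ n eq_refl)) as [x [y [_ <-]]].
  apply (um_nonneg U).
Qed.

Lemma dist_le_radius0 (x y : X) : d x y <= r 0%nat.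
Proof.
  destruct (classic (x = y)) as [<-|Hne].
  - rewrite (proj2 (um_sep U x x) eq_refl). apply radii_nonneg.
  - destruct (proj1 (proj2 Hr (d x y)) (ex_intro _ x (ex_intro _ y (conj Hne eq_refl))))
      as [n <-].
    apply radii_antitone. lia.
Qed.

Lemma vertex_eq_of_common_point (v w : vtx X) (p : X) :
  is_vertex d r v -> is_vertex d r w -> fst v = fst w -> snd v p -> snd w p -> v = w.
Proof.
  destruct v as [n P], w as [m Q]; intros [x Hx] [y Hy] Hnm Hp Hq; simpl in *; subst.
  f_equal. exact (cball_eq_of_mem Hp Hq).
Qed.

Lemma level0_vertex_unique (v w : vtx X) :
  is_vertex d r v -> is_vertex d r w -> fst v = 0%nat -> fst w = 0%nat -> v = w.
Proof.
  intros Hv Hw Hv0 Hw0. pose proof Hv as [x Hx].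
  apply (vertex_eq_of_common_point x); [assumption|assumption|congruence| |].
  - rewrite Hx, Hv0. apply dist_le_radius0.
  - destruct Hw as [y ->]. rewrite Hw0. apply dist_le_radius0.
Qed.

Lemma is_child_cball (x : X) (n : nat) :
  is_child d r (n, cball d x (r n)) (S n, cball d x (r (S n))).
Proof.
  repeat split; try (exists x; reflexivity).
  intros y Hy. unfold cball in *. simpl in *.
  pose proof (radii_antitone (le_S _ _ (le_n n))). lra.
Qed.

Lemma chi_eq_of_dist (w : vtx X) (x y : X) :
  is_vertex d r w -> d x y <= r (fst w) -> chi w x = chi w y.
Proof.
  intros [z Hz] Hxy. unfold chi. rewrite Hz.
  assert (Hyx : d y x <= r (fst w)) by now rewrite (um_sym U).
  destruct (excluded_middle_informative _) as [Hx|Hx];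
    destruct (excluded_middle_informative _) as [Hy|Hy]; try reflexivity; exfalso.
  - exact (Hy (cball_mem_move Hxy Hx)).
  - exact (Hx (cball_mem_move Hyx Hy)).
Qed.

Lemma root_branching (a b : X) :
  d a b = r 0%nat -> branching d r (0%nat, cball d a (r 0%nat)).
Proof.
  intro Hab. split; [exists a; reflexivity|].
  exists (1%nat, cball d a (r 1%nat)), (1%nat, cball d b (r 1%nat)).
  assert (Hb : cball d b (r 1%nat) b).
  { unfold cball. rewrite (proj2 (um_sep U b b) eq_refl). apply radii_nonneg. }
  assert (Hroot : cball d a (r 0%nat) = cball d b (r 0%nat)).
  { apply (cball_eq_of_mem (p := a)); unfold cball; apply dist_le_radius0. }
  split; [apply is_child_cball|]. split; [rewrite Hroot; apply is_child_cball|].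
  intro E. injection E as E. rewrite <- E in Hb. unfold cball in Hb.
  pose proof (proj1 Hr 0%nat). lra.
Qed.

Variables (tau : vtx X -> X) (hp : vtx X -> vtx X * vtx X).
Hypothesis Htau : forall v, is_vertex d r v -> passes (tau v) v.
Hypothesis Hhp : oriented_min_edges d r hp.

Definition edge_term (w v : vtx X) : Z :=
  (chi w (tau (fst (hp v))) - chi w (tau (snd (hp v))))%Z.

Lemma tau_mem_of_child (v c : vtx X) : is_child d r v c -> snd v (tau c).
Proof. intros (_ & Hc & _ & Hsub). apply Hsub, Htau, Hc. Qed.

Lemma edge_term_deep (w v : vtx X) :
  is_vertex d r w -> (fst w <= fst v)%nat -> branching d r v -> edge_term w v = 0%Z.
Proof.
  intros Hw Hwv Hv. destruct (Hhp Hv) as (Hc1 & Hc2 & _).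
  destruct (proj1 Hv) as [x Hx].
  pose proof (tau_mem_of_child Hc1) as H1. pose proof (tau_mem_of_child Hc2) as H2.
  rewrite Hx in H1, H2.
  unfold edge_term.
  rewrite (chi_eq_of_dist (x := tau (fst (hp v))) (y := tau (snd (hp v))) Hw); [lia|].
  eapply Rle_trans; [exact (cball_dist_le H1 H2)|]. now apply radii_antitone.
Qed.

Lemma edge_term_self (v : vtx X) : branching d r v -> edge_term (fst (hp v)) v = 1%Z.
Proof.
  intro Hv. destruct (Hhp Hv) as (Hc1 & Hc2 & Hne).
  destruct Hc1 as (_ & Hw1 & Hl1 & _), Hc2 as (_ & Hw2 & Hl2 & _).
  unfold edge_term, chi.
  destruct (excluded_middle_informative _) as [_|Hout]; [|now destruct (Hout (Htau Hw1))].
  destruct (excluded_middle_informative _) as [Hin|_]; [|reflexivity].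
  exfalso. apply Hne. apply (vertex_eq_of_common_point (tau (snd (hp v)))); auto.
  - congruence.
  - now apply Htau.
Qed.

End Ultrametric.

Theorem mainTheorem3 (X : Type) (d : X -> X -> R) (r : nat -> R)
    (tau : vtx X -> X) (hp : vtx X -> vtx X * vtx X) :
  ultrametric d -> seq_compact d -> infinite_type X -> radii_of d r ->
  choice_function d r tau -> oriented_min_edges d r hp ->
  exists w : vtx X, is_vertex d r w /\
    exists k : Z, k <> 0%Z /\ phi_chi_eq d r tau hp w k.
Proof.
  intros U _ _ Hr [Htau _] Hhp.
  destruct (proj2 (proj2 Hr (r 0%nat)) (ex_intro _ 0%nat eq_refl)) as [a [b [_ Hab]]].
  set (root := (0%nat, cball d a (r 0%nat)) : vtx X).
  assert (Hroot : branching d r root) by exact (root_branching U Hr _ _ Hab).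
  destruct (Hhp root Hroot) as ((_ & Hw1 & Hl1 & _) & _).
  exists (fst (hp root)). split; [exact Hw1|].
  exists 1%Z. split; [lia|].
  change (fin_sum_eq (branching d r) (edge_term tau hp (fst (hp root))) 1%Z).
  rewrite <- (edge_term_self U tau Htau Hhp Hroot).
  apply fin_sum_eq_single; [exact Hroot|].
  intros v Hv Hnz. destruct (fst v) as [|n] eqn:Hlv.
  - apply (level0_vertex_unique U Hr); [apply Hv|exists a; reflexivity|exact Hlv|reflexivity].
  - exfalso. apply Hnz. apply (edge_term_deep U Hr tau Htau Hhp); [exact Hw1| |exact Hv].
    rewrite Hl1, Hlv. simpl. lia.
Qed.
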